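(* Let $\alpha$ be a composition of $n$ and let $D=S_{\omega(\alpha)}\subseteq[n-1]$. Then for each $i\ge 0$, $$\hat L_\alpha^{(i)}=\sum_{E\subseteq[n+i-1]}|T(D,E)|\,L_{\omega(\mathcal C(E))}.$$
   Context: For a composition $\alpha=(\alpha_1,\dots,\alpha_k)$ of $n$, $S_\alpha=\{\alpha_1,\alpha_1+\alpha_2,\dots,\alpha_1+\dots+\alpha_{k-1}\}\subseteq[n-1]$; for $E=\{e_1<\dots<e_k\}\subseteq[m-1]$, $\mathcal C(E)=(e_1,e_2-e_1,\dots,m-e_k)$, a composition of $m$. $\mathrm{rev}(\alpha)=(\alpha_k,\dots,\alpha_1)$ and $\omega(\alpha)$ is the composition of $n$ with $S_{\omega(\alpha)}=[n-1]\setminus S_{\mathrm{rev}(\alpha)}$. $L_\beta$ is the fundamental quasisymmetric function: for $\beta$ a composition of $m$, $L_\beta=\sum x_{i_1}\cdots x_{i_m}$ over $i_1\le\dots\le i_m$ with $i_j<i_{j+1}$ whenever $j\in S_\beta$. $\hat L_\alpha=\sum x^\sigma$, summed over all sequences $(\sigma_1,\dots,\sigma_n)$ of nonempty finite multisets of positive integers with $\max\sigma_j\le\min\sigma_{j+1}$ for all $j$ and $\max\sigma_j<\min\sigma_{j+1}$ when $j\in S_\alpha$, where $x^\sigma=\prod_r x_r^{(\text{total multiplicity of } r \text{ in } \sigma_1,\dots,\sigma_n)}$. $\hat L_\alpha^{(i)}$ denotes the homogeneous component of $\hat L_\alpha$ of degree $n+i$. For $D\subseteq[n-1]$ and $E\subseteq[n+i-1]$,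 an $i$-extension of $D$ to $E$ is an injective order-preserving map $t:[n-1]\to[n+i-1]$ with $t(D)\subseteq E$ and $E\setminus t(D)=[n+i-1]\setminus t([n-1])$; $T(D,E)$ is the set of $i$-extensions of $D$ to $E$. *)

From HB Require Import structures.
From mathcomp Require Import all_boot all_algebra.
From mathcomp Require Import mpoly.
Set Implicit Arguments. Unset Strict Implicit. Unset Printing Implicit Defensive.
Import GRing.Theory.
Local Open Scope ring_scope.

Definition is_comp (n : nat) (a : seq nat) : bool :=
  all (fun x => 0 < x)%N a && (sumn a == n).

Definition Sset (a : seq nat) : pred nat :=
  fun k => k \in [seq sumn (take j a) | j <- iota 1 (size a).-1].

(* C(E) for E a subset of [m-1] (given as a predicate on nat, only its
   elements in [m-1] matter): (e1, e2-e1, ..., m-ek) *)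
Definition compOfSet (m : nat) (E : pred nat) : seq nat :=
  pairmap (fun x y => y - x)%N 0%N (rcons [seq k <- iota 1 m.-1 | E k] m).

Definition omega (n : nat) (a : seq nat) : seq nat :=
  compOfSet n (fun k => ~~ Sset (rev a) k).

(* A set E : {set 'I_k} encodes the subset {v+1 | v in E} of [k]. *)
Definition natset (k : nat) (E : {set 'I_k}) : pred nat :=
  fun x => [exists v in E, x == (val v).+1].

(* The fundamental quasisymmetric function L_b, truncated to the variables
   x_1..x_N (variable x_{r+1} is 'X_r, r : 'I_N). *)
Definition tval (N m : nat) (t : m.-tuple 'I_N) (j : nat) : nat :=
  nth 0%N [seq val x | x <- t] j.

Definition fundL (N : nat) (b : seq nat) : {mpoly int[N]} :=
  \sum_(t : (sumn b).-tuple 'I_N |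
         [forall j : 'I_(sumn b), (j.+1 < sumn b)%N ==>
            ((tval t j <= tval t j.+1)%N &&
             (Sset b j.+1 ==> (tval t j < tval t j.+1)%N))])
     \prod_(j < sumn b) 'X_(tnth t j).

(* Degree (n+i) component of hat L_a, truncated to x_1..x_N.  A sequence
   (sigma_1..sigma_n) of nonempty finite multisets is given by multiplicity
   functions; in degree n+i every multiplicity is <= n+i. *)
Definition mult (N n K : nat) (s : n.-tuple {ffun 'I_N -> 'I_K.+1})
  (j : nat) (r : 'I_N) : nat := nth [ffun => ord0] s j r.

Definition hatL (N n i : nat) (a : seq nat) : {mpoly int[N]} :=
  \sum_(s : n.-tuple {ffun 'I_N -> 'I_(n + i).+1} |
         [&& (\sum_(j < n) \sum_(r : 'I_N) mult s j r == n + i)%N,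
             [forall j : 'I_n, [exists r : 'I_N, (0 < mult s j r)%N]] &
             [forall j : 'I_n, (j.+1 < n)%N ==>
                [forall r : 'I_N, forall r' : 'I_N,
                   ((0 < mult s j r)%N && (0 < mult s j.+1 r')%N) ==>
                   ((r <= r')%N && (Sset a j.+1 ==> (r < r')%N))]]])
     \prod_(j < n) \prod_(r : 'I_N) 'X_r ^+ mult s j r.

(* |T(D,E)| for D subset of [n-1], E subset of [m-1]: maps t : [n-1] -> [m-1]
   (k+1 |-> (t k)+1) injective and order preserving (= strictly increasing),
   with t(D) in E and E \ t(D) = [m-1] \ t([n-1]). *)
Definition Tcount (n m : nat) (D E : pred nat) : nat :=
  #|[set t : {ffun 'I_n.-1 -> 'I_m.-1} |
     [&& [forall k : 'I_n.-1, forall k' : 'I_n.-1, (k < k')%N ==> (t k < t k')%N],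
         [forall k : 'I_n.-1, D k.+1 ==> E (t k).+1] &
         [forall v : 'I_m.-1,
            (E v.+1 && ~~ [exists k : 'I_n.-1, D k.+1 && (t k == v)])
            == ~~ [exists k : 'I_n.-1, t k == v]]]]|.

From Pilot Require Import Defs.
From HB Require Import structures.
From mathcomp Require Import all_boot all_algebra.
From mathcomp Require Import mpoly.
From mathcomp Require Import zify.
Set Implicit Arguments. Unset Strict Implicit. Unset Printing Implicit Defensive.
Import GRing.Theory.

(* Both sides are sums over pairs (p, w) of a strictly increasing map
   p : [n-1] -> [n+i-1] and a weakly increasing word w of length n+i that must
   increase strictly at the positions p(j) with j in S_alpha.

   On the left, p records where the n multisets sigma_1, ..., sigma_n end when
   their elements are written out in increasing order one after the other, and
   w is that concatenated word.

   On the right, an i-extension t of D = S_omega(alpha) determines E uniquely: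
   E = t(D) together with everything outside the image of t.  The descent set
   of omega(C(E)) is {k | n+i-k not in E}; after reflecting t (k |-> n-2-k on
   the source and v |-> n+i-2-v on the target) it becomes exactly the set of
   strict positions above, because S_omega(alpha) is the reflected complement
   of S_alpha. *)

Lemma Sset_rev (a : seq nat) k : (k <= sumn a) ->
  Sset (rev a) k = Sset a (sumn a - k).
Proof.
move=> hk; rewrite /Sset size_rev.
have sumn_take_rev j : (j <= size a) ->
  sumn (take j (rev a)) = (sumn a - sumn (take (size a - j) a)).
  move=> hj; rewrite take_rev sumn_rev.
  have := cat_take_drop (size a - j) a => /(congr1 sumn); rewrite sumn_cat => <-.
  by rewrite addKn.
have sumn_take_le j : (sumn (take j a) <= sumn a).
  by rewrite -{2}(cat_take_drop j a) sumn_cat leq_addr.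
apply/mapP/mapP => -[j]; rewrite mem_iota => /andP[j1 j2] hj.
- exists (size a - j); first by rewrite mem_iota; lia.
  rewrite hj sumn_take_rev; last by lia.
  have := sumn_take_le (size a - j); have := sumn_take_le (size a - (size a - j)).
  have -> : (size a - (size a - j) = j) by lia.
  lia.
- exists (size a - j); first by rewrite mem_iota; lia.
  rewrite sumn_take_rev; last by lia.
  have -> : (size a - (size a - j) = j) by lia.
  have := sumn_take_le j; lia.
Qed.

Lemma sumn_take_pairmap x0 (u : seq nat) j : path leq x0 u -> (j <= size u) ->
  sumn (take j (pairmap (fun x y => y - x) x0 u)) = (nth x0 (x0 :: u) j - x0).
Proof.
elim: u x0 j => [|y u IH] x0 j.
  by case: j => [|j] //= _ _; rewrite subnn.
case: j => [|j] /=; first by rewrite subnn.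
move=> /andP[xy pu] hj; rewrite IH //.
have : (y <= nth y (y :: u) j).
  have := sorted_leq_nth leq_trans leqnn y (s := y :: u) pu.
  by move=> /(_ 0 j); apply => //; rewrite inE /=; lia.
rewrite (set_nth_default y x0) /=; last by lia.
lia.
Qed.

Section CompOfSet.
Variables (m : nat) (E : pred nat).
Let cuts := [seq k <- iota 1 m.-1 | E k].

Lemma size_compOfSet : size (compOfSet m E) = (size cuts).+1.
Proof. by rewrite /compOfSet size_pairmap size_rcons. Qed.

Lemma sumn_take_compOfSet j : (j <= (size cuts).+1) ->
  sumn (take j (compOfSet m E)) = nth 0 (0 :: rcons cuts m) j.
Proof.
have cuts_sorted : sorted ltn cuts.
  by apply: sorted_filter; [exact: ltn_trans | exact: iota_ltn_sorted].
have cuts_range k : k \in cuts -> (0 < k < m).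
  by rewrite mem_filter mem_iota => /andP[_]; lia.
have path_cuts : path leq 0 (rcons cuts m).
  rewrite rcons_path; apply/andP; split.
    case: cuts cuts_sorted cuts_range => //= x s ss _.
    exact: (sub_path (fun a b => @ltnW a b) ss).
  case: cuts cuts_sorted cuts_range => //= x s _ sr.
  by have := sr (last x s); rewrite mem_last => /(_ isT); lia.
by move=> hj; rewrite /compOfSet sumn_take_pairmap // ?subn0 // size_rcons.
Qed.

Lemma sumn_compOfSet : sumn (compOfSet m E) = m.
Proof.
rewrite -(take_size (compOfSet m E)) size_compOfSet sumn_take_compOfSet //=.
by rewrite nth_rcons ltnn eqxx.
Qed.

Lemma Sset_compOfSet k : Sset (compOfSet m E) k = [&& (0 < k), (k < m) & E k].
Proof.
rewrite /Sset size_compOfSet /=.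
have -> : [seq sumn (take j (compOfSet m E)) | j <- iota 1 (size cuts)] = cuts.
  rewrite (_ : [seq sumn (take j (compOfSet m E)) | j <- iota 1 (size cuts)] =
     [seq nth 0 (rcons cuts m) j.-1 | j <- iota 1 (size cuts)]); last first.
    apply/eq_in_map => j; rewrite mem_iota => /andP[h1 h2].
    by rewrite sumn_take_compOfSet; [case: j h1 {h2} | lia].
  rewrite -[1]addn0 iotaDl -map_comp.
  rewrite (eq_map (g := fun j => nth 0 (rcons cuts m) j)); last by [].
  by rewrite map_nth_iota0 ?size_rcons // -cats1 take_size_cat.
by rewrite mem_filter mem_iota andbC; lia.
Qed.

End CompOfSet.

Lemma Sset_omega n a k : sumn a = n -> (0 < k < n) ->
  Sset (omega n a) k = ~~ Sset a (n - k).
Proof.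
move=> sa hk; rewrite /omega Sset_compOfSet Sset_rev sa; last lia.
by case/andP: hk => -> ->.
Qed.

Definition descWord N m (P : pred nat) (w : m.-tuple 'I_N) : bool :=
  [forall j : 'I_m, (j.+1 < m) ==>
     ((Defs.tval w j <= Defs.tval w j.+1) &&
      (P j.+1 ==> (Defs.tval w j < Defs.tval w j.+1)))].

Definition fundLP N m (P : pred nat) : {mpoly int[N]} :=
  \sum_(w : m.-tuple 'I_N | descWord P w) \prod_(j < m) 'X_(tnth w j).

Lemma fundLE N b : fundL N b = fundLP N (sumn b) (Sset b).
Proof. by []. Qed.

Lemma eq_fundLP N m (P Q : pred nat) : (forall k, (0 < k < m) -> P k = Q k) ->
  fundLP N m P = fundLP N m Q.
Proof.
move=> PQ; apply: eq_bigl => w; apply: eq_forallb => j.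
by case: (ltnP j.+1 m) => // hj; rewrite PQ.
Qed.

Lemma fundL_omega_compOfSet N m (P : pred nat) :
  fundL N (omega m (compOfSet m P)) = fundLP N m (fun k => ~~ P (m - k)).
Proof.
rewrite fundLE sumn_compOfSet; apply: eq_fundLP => k hk.
rewrite Sset_omega ?sumn_compOfSet // Sset_compOfSet.
have k_lt : (0 < m - k < m) by lia.
by case/andP: k_lt => -> ->.
Qed.

Section IncreasingMaps.
Variables a b : nat.

Definition incr (t : {ffun 'I_a -> 'I_b}) : bool :=
  [forall k : 'I_a, forall k' : 'I_a, (k < k') ==> (t k < t k')].

Lemma incr_inj t : incr t -> injective t.
Proof.
move=> /forallP incr_t k k' e; apply: val_inj => /=.
case: (ltngtP k k') => // hk.
- by have := forallP (incr_t k) k'; rewrite hk e ltnn.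
- by have := forallP (incr_t k') k; rewrite hk e ltnn.
Qed.

Definition rev_ffun (t : {ffun 'I_a -> 'I_b}) : {ffun 'I_a -> 'I_b} :=
  [ffun k => rev_ord (t (rev_ord k))].

Lemma rev_ffunK : involutive rev_ffun.
Proof. by move=> t; apply/ffunP => k; rewrite !ffunE !rev_ordK. Qed.

Lemma incr_rev_ffun t : incr (rev_ffun t) = incr t.
Proof.
suff incr_rev u : incr u -> incr (rev_ffun u).
  by apply/idP/idP => [/incr_rev|/incr_rev //]; rewrite rev_ffunK.
move=> /forallP incr_u; apply/forallP => k; apply/forallP => k'; apply/implyP => kk'.
rewrite !ffunE /=.
have /implyP := forallP (incr_u (rev_ord k')) (rev_ord k); rewrite /=.
have := ltn_ord k'; have := ltn_ord (u (rev_ord k)); have := ltn_ord (u (rev_ord k')).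
move=> h1 h2 h3 /(_ _); lia.
Qed.

End IncreasingMaps.

Lemma natsetE k (E : {set 'I_k}) (v : 'I_k) : natset E v.+1 = (v \in E).
Proof.
apply/existsP/idP => [[w /andP[wE /eqP [e]]]|vE]; last by exists v; rewrite vE eqxx.
by rewrite (_ : v = w) //; apply: val_inj.
Qed.

(* The only E for which t can be an extension of D to E. *)
Definition extSet a b (D : pred nat) (t : {ffun 'I_a -> 'I_b}) : {set 'I_b} :=
  [set v | [exists k : 'I_a, D k.+1 && (t k == v)] || ~~ [exists k : 'I_a, t k == v]].

Lemma is_extensionE a b (D : pred nat) (E : {set 'I_b}) (t : {ffun 'I_a -> 'I_b}) :
  [&& [forall k : 'I_a, forall k' : 'I_a, (k < k') ==> (t k < t k')],
      [forall k : 'I_a, D k.+1 ==> natset E (t k).+1] &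
      [forall v : 'I_b,
         (natset E v.+1 && ~~ [exists k : 'I_a, D k.+1 && (t k == v)])
         == ~~ [exists k : 'I_a, t k == v]]]
  = incr t && (E == extSet D t).
Proof.
rewrite -/(incr t); case: (incr t) => //=.
apply/andP/eqP => [[/forallP tD /forallP tE]|->].
  apply/setP => v; rewrite inE.
  case: (boolP [exists k : 'I_a, D k.+1 && (t k == v)]) => [|notD].
    by case/existsP=> k /andP[Dk /eqP <-]; have := implyP (tD k) Dk; rewrite natsetE.
  by have /eqP := tE v; rewrite natsetE notD andbT.
split.
  apply/forallP => k; apply/implyP => Dk; rewrite natsetE inE.
  by apply/orP; left; apply/existsP; exists k; rewrite Dk eqxx.
apply/forallP => v; rewrite natsetE inE.
case: (boolP [exists k : 'I_a, D k.+1 && (t k == v)]) => hD /=.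
  rewrite eq_sym eqbF_neg negbK.
  by case/existsP: hD => k /andP[_ e]; apply/existsP; exists k.
by rewrite andbT; case: (boolP [exists k : 'I_a, t k == v]).
Qed.

Definition cutDescents (alpha : seq nat) a b (p : {ffun 'I_a -> 'I_b}) : pred nat :=
  fun k => [exists j : 'I_a, ((p j).+1 == k) && Sset alpha j.+1].

Section ExtensionSide.
Variables (n i : nat) (alpha : seq nat) (N : nat).
Hypotheses (n_gt0 : 0 < n) (sumn_alpha : sumn alpha = n).
Local Notation m := (n + i).

Lemma descents_extSet (t : {ffun 'I_n.-1 -> 'I_m.-1}) k : incr t -> (0 < k < m) ->
  ~~ natset (extSet (Sset (omega n alpha)) t) (m - k)
  = cutDescents alpha (rev_ffun t) k.
Proof.
move=> incr_t hk.
have hv : (m - k).-1 < m.-1 by lia.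
have -> : (m - k) = (Ordinal hv).+1 by rewrite /=; lia.
rewrite natsetE inE negb_or /cutDescents.
apply/idP/idP => [/andP[notD /negPn/existsP[k' /eqP tk']]|].
  have := ltn_ord k' => hk'.
  apply/existsP; exists (rev_ord k'); rewrite ffunE rev_ordK tk' /=; apply/andP; split.
    by apply/eqP; lia.
  have : ~~ Sset (omega n alpha) k'.+1.
    by apply: contra notD => Dk'; apply/existsP; exists k'; rewrite Dk' tk' eqxx.
  rewrite (Sset_omega sumn_alpha); last lia.
  by rewrite negbK (_ : (n.-1 - k'.+1).+1 = n - k'.+1) //; lia.
case/existsP=> j /andP[/eqP]; rewrite ffunE /= => pj Sj.
have := ltn_ord j; have := ltn_ord (t (rev_ord j)) => htj hj.
apply/andP; split; last first.
  by apply/negPn/existsP; exists (rev_ord j); apply/eqP/val_inj => /=; lia.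
apply/negP => /existsP[k' /andP[Dk' /eqP tk']].
have e : k' = rev_ord j by apply: (incr_inj incr_t); apply: val_inj; rewrite tk' /=; lia.
move: Dk'; rewrite e (Sset_omega sumn_alpha) /=; last lia.
by rewrite (_ : (n - (n.-1 - j.+1).+1) = j.+1) ?Sj //; lia.
Qed.

Lemma sum_Tcount_fundL :
  (\sum_(E : {set 'I_m.-1})
     (Tcount n m (Sset (omega n alpha)) (natset E))%:R
       *: fundL N (omega m (compOfSet m (natset E))))%R
  = (\sum_(p : {ffun 'I_n.-1 -> 'I_m.-1} | incr p) fundLP N m (cutDescents alpha p))%R.
Proof.
set D := Sset (omega n alpha).
transitivity (\sum_(E : {set 'I_m.-1})
     \sum_(t : {ffun 'I_n.-1 -> 'I_m.-1} | incr t && (E == extSet D t))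
     fundLP N m (fun k => ~~ natset E (m - k)%N))%R.
  apply: eq_bigr => E _; rewrite fundL_omega_compOfSet scaler_nat /Tcount -sumr_const.
  by apply: eq_bigl => t; rewrite inE is_extensionE.
rewrite (exchange_big_dep predT) //=.
transitivity (\sum_(t : {ffun 'I_n.-1 -> 'I_m.-1} | incr t)
     fundLP N m (fun k => ~~ natset (extSet D t) (m - k)%N))%R.
  rewrite [RHS]big_mkcond; apply: eq_bigr => t _.
  case: (boolP (incr t)) => incr_t; last by rewrite big_pred0.
  exact: (big_pred1 (extSet D t)).
rewrite [RHS](reindex_inj (inv_inj (@rev_ffunK _ _))).
apply: eq_big => [t|t incr_t]; first by rewrite incr_rev_ffun.
by apply: eq_fundLP => k hk; rewrite descents_extSet.
Qed.

End ExtensionSide.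

Lemma nth_sumn_take (a : seq nat) j : nth 0 a j = sumn (take j.+1 a) - sumn (take j a).
Proof.
case: (ltnP j (size a)) => h; first by rewrite (take_nth 0 h) sumn_rcons addKn.
by rewrite nth_default // !take_oversize ?subnn //; lia.
Qed.

Lemma eq_from_sumn_take (a b : seq nat) : size a = size b ->
  (forall j, j <= size a -> sumn (take j a) = sumn (take j b)) -> a = b.
Proof.
move=> hs h; apply: (eq_from_nth (x0 := 0)) => // j hj.
by rewrite !nth_sumn_take !h //; lia.
Qed.

Lemma ltn_sumn_take (l : seq nat) a b : all (fun x => 0 < x) l -> a < b -> b <= size l ->
  sumn (take a l) < sumn (take b l).
Proof.
move=> /allP pos; elim: b => // c IH ac cl.
rewrite (take_nth 0 cl) sumn_rcons.
have : 0 < nth 0 l c by apply: pos; exact: mem_nth.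
have [lt|->] : a < c \/ a = c by lia.
  by have := IH lt (ltnW cl); lia.
lia.
Qed.

Lemma all_pos_pairmap_sub x0 (u : seq nat) : path ltn x0 u ->
  all (fun x => 0 < x) (pairmap (fun x y => y - x) x0 u).
Proof. by elim: u x0 => //= y u IH x0 /andP[h1 h2]; rewrite IH // andbT; lia. Qed.

Lemma size_take_drop_leq (T : Type) (l : seq T) c d : size (take c (drop d l)) <= size l.
Proof. by rewrite size_take size_drop; case: ifP; lia. Qed.

Lemma mem_take_drop (T : eqType) (x0 : T) (l : seq T) c d x :
  x \in take c (drop d l) ->
  exists a, [/\ d <= a, a < d + c, a < size l & nth x0 l a = x].
Proof.
move=> /(nthP x0) [a ha <-]; rewrite size_take size_drop in ha.
have [h1 h2] : a < c /\ a < size l - d by move: ha; case: ifP => h3 h4; split; lia.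
by exists (d + a); rewrite nth_take ?nth_drop //; split => //; lia.
Qed.

Lemma pairwise_nseq T (e : rel T) k x : e x x -> pairwise e (nseq k x).
Proof. by move=> exx; elim: k => //= k ->; rewrite andbT all_nseq exx orbT. Qed.

Lemma sorted_flatten_nseq (T : eqType) (e : rel T) (f : T -> nat) (l : seq T) :
  transitive e -> reflexive e -> sorted e l ->
  sorted e (flatten [seq nseq (f x) x | x <- l]).
Proof.
move=> tr rf; rewrite !(sorted_pairwise tr).
elim: l => //= x l IH /andP[hx hl].
rewrite pairwise_cat IH // pairwise_nseq ?rf // !andbT.
apply/allrelP => a b /nseqP[-> _] /flattenP[c /mapP[y yl ->] /nseqP[-> _]].
exact: (allP hx).
Qed.

Lemma sorted_flatten (T : Type) (e : rel T) (x0 : T) (L : seq (seq T)) :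
  transitive e -> all (fun l => 0 < size l) L -> all (sorted e) L ->
  (forall j, j.+1 < size L -> e (last x0 (nth [::] L j)) (head x0 (nth [::] L j.+1))) ->
  sorted e (flatten L).
Proof.
move=> tr; elim: L => //= l L IH /andP[nl nL] /andP[sl sL] adj.
have sL' : sorted e (flatten L) by apply: IH => // j hj; apply: (adj j.+1).
case: L nL sL adj sL' {IH} => [|l' L] /=; first by rewrite cats0.
move=> /andP[nl' _] _ adj sL'.
case: l nl sl adj => // y l0 _ sl adj /=.
rewrite cat_path (sl : path e y l0) /=.
case: l' nl' adj sL' => // z l1 _ adj sL' /=.
rewrite (sL' : path e z (l1 ++ flatten L)) andbT.
by have := adj 0 isT.
Qed.

Lemma nth_flatten_boundary (T : eqType) (x0 : T) (L : seq (seq T)) j :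
  all (fun l => 0 < size l) L -> j.+1 < size L ->
  let b := sumn (take j.+1 (shape L)) in
  nth x0 (flatten L) b = head x0 (nth [::] L j.+1) /\
  nth x0 (flatten L) b.-1 = last x0 (nth [::] L j).
Proof.
move=> /allP pos hj b.
have e : flatten L = flatten (take j.+1 L) ++ flatten (drop j.+1 L).
  by rewrite -flatten_cat cat_take_drop.
have sz : size (flatten (take j.+1 L)) = b by rewrite size_flatten /shape map_take.
have nj : 0 < size (nth [::] L j) by apply: pos; apply: mem_nth; exact: ltnW.
have nj1 : 0 < size (nth [::] L j.+1) by apply: pos; apply: mem_nth.
have ht : take j.+1 L = rcons (take j L) (nth [::] L j) by apply: take_nth; exact: ltnW.
have b_gt0 : 0 < b by rewrite -sz ht flatten_rcons size_cat; exact: ltn_addl.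
rewrite e; split.
  rewrite nth_cat sz ltnn subnn (drop_nth [::] hj) /=.
  by case: (nth [::] L j.+1) nj1.
rewrite nth_cat sz (_ : b.-1 < b); last by rewrite prednK.
rewrite -sz nth_last ht flatten_rcons last_cat.
by case: (nth [::] L j) nj.
Qed.

Section CountMem.
Variable N : nat.

Lemma count_mem_flatten_nseq (f : 'I_N -> nat) r :
  count_mem r (flatten [seq nseq (f r') r' | r' <- enum 'I_N]) = f r.
Proof.
rewrite count_flatten -map_comp sumnE big_map big_enum /=.
rewrite (bigD1 r) //= count_nseq /= eqxx mul1n big1 ?addn0 // => r' /negbTE.
by rewrite count_nseq /= eq_sym => ->.
Qed.

Lemma sum_count_mem (l : seq 'I_N) : \sum_(r : 'I_N) count_mem r l = size l.
Proof.
elim: l => [|x l IH] /=; first by rewrite big1.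
rewrite big_split /= IH (bigD1 x) //= eqxx big1 // => r /negbTE.
by rewrite eq_sym => ->.
Qed.

Lemma prod_count_mem (l : seq 'I_N) :
  (\prod_(r : 'I_N) 'X_r ^+ count_mem r l = \prod_(x <- l) 'X_x :> {mpoly int[N]})%R.
Proof.
elim: l => [|x l IH]; first by rewrite big_nil; apply: big1 => r _; rewrite expr0.
rewrite big_cons -IH /=.
under eq_bigr => r _ do rewrite exprD.
rewrite big_split /=; congr (_ * _)%R.
rewrite (bigD1 x) //= eqxx expr1 big1 ?mulr1 // => r /negbTE.
by rewrite eq_sym => ->; rewrite expr0.
Qed.

End CountMem.

Section CutShape.
Variables (n m : nat).
Hypotheses (n_gt0 : 0 < n) (n_le_m : n <= m).

(* A strictly increasing p cuts [m] into the n nonempty intervals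
   (0, p(0)+1], (p(0)+1, p(1)+1], ..., (p(n-2)+1, m]. *)
Definition cuts (p : {ffun 'I_n.-1 -> 'I_m.-1}) : seq nat :=
  [seq (p k).+1 | k <- enum 'I_n.-1].
Definition cutShape p := pairmap (fun x y => y - x) 0 (rcons (cuts p) m).
Definition cutAt p j := nth 0 (0 :: rcons (cuts p) m) j.

Lemma size_cuts p : size (cuts p) = n.-1.
Proof. by rewrite size_map size_enum_ord. Qed.

Lemma size_cutShape p : size (cutShape p) = n.
Proof. by rewrite size_pairmap size_rcons size_cuts prednK. Qed.

Lemma cutAtS p (k : 'I_n.-1) : cutAt p k.+1 = (p k).+1.
Proof.
rewrite /cutAt /= nth_rcons size_cuts ltn_ord.
by rewrite (nth_map k) ?size_enum_ord // nth_ord_enum.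
Qed.

Lemma cutAt_last p : cutAt p n = m.
Proof. by rewrite /cutAt -(prednK n_gt0) /= nth_rcons size_cuts ltnn eqxx. Qed.

Lemma path_cuts p : incr p -> path ltn 0 (rcons (cuts p) m).
Proof.
move=> /forallP incr_p; rewrite rcons_path; apply/andP; split.
  have : sorted ltn (cuts p).
    rewrite /cuts sorted_map.
    apply: (sub_sorted (e := relpre val ltn)).
      by move=> a b /= ab; have := implyP (forallP (incr_p a) b) ab.
    by rewrite -sorted_map val_enum_ord iota_ltn_sorted.
  have : all (fun x => 0 < x) (cuts p) by apply/allP => x /mapP[k _ ->].
  by case: (cuts p) => //= x s /andP[-> _] ->.
have := mem_last 0 (cuts p); rewrite inE => /orP[/eqP ->|]; first lia.
by move=> /mapP[k _ ->]; have := ltn_ord (p k); lia.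
Qed.

Lemma cutShape_pos p : incr p -> all (fun x => 0 < x) (cutShape p).
Proof. by move=> incr_p; apply: all_pos_pairmap_sub; apply: path_cuts. Qed.

Lemma sumn_take_cutShape p j : incr p -> j <= n -> sumn (take j (cutShape p)) = cutAt p j.
Proof.
move=> incr_p hj; rewrite /cutShape sumn_take_pairmap ?subn0 //.
  by apply: sub_path (path_cuts incr_p) => a b /ltnW.
by rewrite size_rcons size_cuts prednK.
Qed.

Lemma sumn_cutShape p : incr p -> sumn (cutShape p) = m.
Proof.
move=> incr_p; rewrite -(take_size (cutShape p)) size_cutShape.
by rewrite sumn_take_cutShape // cutAt_last.
Qed.

End CutShape.

Section MultisetSide.
Variables (n i : nat) (alpha : seq nat) (N' : nat).
Hypothesis n_gt0 : 0 < n.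
Local Notation N := N'.+1.
Local Notation m := (n + i).
Local Notation cutMap := {ffun 'I_n.-1 -> 'I_m.-1}.
Local Notation word := (m.-tuple 'I_N).
Local Notation multSeq := (n.-tuple {ffun 'I_N -> 'I_m.+1}).

Let n_le_m : n <= m := leq_addr i n.
Let n1_le_m1 : n.-1 <= m.-1 := ltac:(lia).

Definition hatL_pred (s : multSeq) : bool :=
  [&& (\sum_(j < n) \sum_(r : 'I_N) mult s j r == n + i),
      [forall j : 'I_n, [exists r : 'I_N, 0 < mult s j r]] &
      [forall j : 'I_n, (j.+1 < n) ==>
         [forall r : 'I_N, forall r' : 'I_N,
            ((0 < mult s j r) && (0 < mult s j.+1 r')) ==>
            ((r <= r') && (Sset alpha j.+1 ==> (r < r')))]]].

Definition cutWord (pw : cutMap * word) :=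
  incr pw.1 && descWord (cutDescents alpha pw.1) pw.2.

Definition block (p : cutMap) (w : word) j : seq 'I_N := nth [::] (reshape (cutShape p) w) j.

Definition multsOf (pw : cutMap * word) : multSeq :=
  [tuple [ffun r => inord (count_mem r (block pw.1 pw.2 j))] | j < n].

Definition blockOf (s : multSeq) j : seq 'I_N :=
  flatten [seq nseq (mult s j r) r | r <- enum 'I_N].
Definition blocks s := [seq blockOf s j | j <- iota 0 n].
Definition wordOf s : word := insubd (nseq_tuple m ord0) (flatten (blocks s)).
Definition cutsOf s : cutMap :=
  [ffun k => insubd (widen_ord n1_le_m1 k) (sumn (take k.+1 (shape (blocks s)))).-1].
Definition cutWordOf s := (cutsOf s, wordOf s).

Definition ord_leq : rel 'I_N := relpre val leq.

Lemma ord_leq_trans : transitive ord_leq. Proof. move=> b a c; exact: leq_trans. Qed.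
Lemma ord_leq_anti : antisymmetric ord_leq.
Proof. by move=> a b h; apply: val_inj; apply: anti_leq. Qed.
Lemma ord_leq_refl : reflexive ord_leq. Proof. by move=> a; exact: leqnn. Qed.

Lemma sorted_nseq_enum (f : 'I_N -> nat) :
  sorted ord_leq (flatten [seq nseq (f r) r | r <- enum 'I_N]).
Proof.
apply: sorted_flatten_nseq; [exact: ord_leq_trans | exact: ord_leq_refl|].
by rewrite /ord_leq -sorted_map val_enum_ord iota_sorted.
Qed.

Lemma tvalE (w : word) j : j < m -> Defs.tval w j = nth ord0 w j.
Proof. by move=> hj; rewrite /Defs.tval (nth_map ord0) // size_tuple. Qed.

Lemma mult_tnth (s : multSeq) (j : 'I_n) r : mult s j r = tnth s j r.
Proof. by rewrite /mult (tnth_nth [ffun => ord0]). Qed.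

Lemma mult_multsOf pw (j : 'I_n) r : mult (multsOf pw) j r = count_mem r (block pw.1 pw.2 j).
Proof.
rewrite /mult nth_mktuple ffunE inordK // ltnS.
apply: (leq_trans (count_size _ _)); rewrite /block nth_reshape.
by apply: (leq_trans (size_take_drop_leq _ _ _)); rewrite size_tuple.
Qed.

Lemma mem_blockOf s j x : (x \in blockOf s j) = (0 < mult s j x).
Proof. by rewrite -has_pred1 has_count count_mem_flatten_nseq. Qed.

Lemma size_blockOf s j : size (blockOf s j) = \sum_(r : 'I_N) mult s j r.
Proof. by rewrite -sum_count_mem; apply: eq_bigr => r _; rewrite count_mem_flatten_nseq. Qed.

Lemma nth_blocks s j : j < n -> nth [::] (blocks s) j = blockOf s j.
Proof. by move=> hj; rewrite (nth_map 0) ?size_iota // nth_iota. Qed.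

Lemma size_blocks s : size (blocks s) = n.
Proof. by rewrite size_map size_iota. Qed.

Section FromMultisets.
Variable s : multSeq.
Hypothesis s_valid : hatL_pred s.

Lemma sumn_shape_blocks : sumn (shape (blocks s)) = m.
Proof.
case/and3P: s_valid => /eqP sum_mult _ _; rewrite -[RHS]sum_mult.
rewrite /shape /blocks -map_comp sumnE big_map.
rewrite (_ : iota 0 n = index_iota 0 n) ?big_mkord; last by rewrite /index_iota subn0.
by apply: eq_bigr => j _ /=; rewrite size_blockOf.
Qed.

Lemma shape_blocks_pos : all (fun x => 0 < x) (shape (blocks s)).
Proof.
case/and3P: s_valid => _ /forallP nonempty _; apply/allP => x /mapP[l /mapP[j]].
rewrite mem_iota /= => hj -> ->.
have [r hr] := existsP (nonempty (Ordinal hj)).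
by rewrite size_blockOf (bigD1 r) //= ltn_addr.
Qed.

Lemma blocks_nonempty : all (fun l => 0 < size l) (blocks s).
Proof. by have := shape_blocks_pos; rewrite /shape all_map. Qed.

Lemma blockOf_nonempty j : j < n -> 0 < size (blockOf s j).
Proof.
move=> hj; have /allP := blocks_nonempty; apply.
by rewrite -(nth_blocks s hj); apply: mem_nth; rewrite size_blocks.
Qed.

Lemma blocks_adjacent j : j.+1 < n ->
  (last ord0 (blockOf s j) <= head ord0 (blockOf s j.+1)) &&
  (Sset alpha j.+1 ==> (last ord0 (blockOf s j) < head ord0 (blockOf s j.+1))).
Proof.
move=> hj; case/and3P: s_valid => _ _ /forallP ordered.
have := ordered (Ordinal (ltnW hj)); rewrite /= hj /=.
move=> /forallP /(_ (last ord0 (blockOf s j))) /forallP /(_ (head ord0 (blockOf s j.+1))).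
rewrite -!mem_blockOf => /implyP; apply; apply/andP; split.
  by case: (blockOf s j) (blockOf_nonempty (ltnW hj)) => // a l _; exact: (mem_last a l).
by case: (blockOf s j.+1) (blockOf_nonempty hj) => // a l _; exact: mem_head.
Qed.

Lemma cutsOfE (k : 'I_n.-1) : (cutsOf s k).+1 = sumn (take k.+1 (shape (blocks s))).
Proof.
have hk : k.+1 < n by have := ltn_ord k; lia.
have hs : size (shape (blocks s)) = n by rewrite size_map size_blocks.
have h1 : sumn (take k.+1 (shape (blocks s))) < m.
  rewrite -sumn_shape_blocks -[X in _ < sumn X](take_oversize (n := n)) ?hs //.
  by apply: ltn_sumn_take shape_blocks_pos hk _; rewrite hs.
have h2 : 0 < sumn (take k.+1 (shape (blocks s))).
  have := ltn_sumn_take (a := 0) shape_blocks_pos (ltn0Sn k); rewrite take0 /=; apply.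
  by rewrite hs; exact: ltnW.
by rewrite ffunE insubdK; [lia | rewrite unfold_in; lia].
Qed.

Lemma incr_cutsOf : incr (cutsOf s).
Proof.
apply/forallP => k; apply/forallP => k'; apply/implyP => kk'.
have := cutsOfE k; have := cutsOfE k'.
have := ltn_sumn_take (a := k.+1) (b := k'.+1) shape_blocks_pos kk'.
by rewrite size_map size_blocks; have := ltn_ord k'; lia.
Qed.

Lemma cutShape_cutsOf : cutShape (cutsOf s) = shape (blocks s).
Proof.
apply: eq_from_sumn_take; first by rewrite (size_cutShape n_gt0) size_map size_blocks.
rewrite (size_cutShape n_gt0) => j hj.
rewrite (sumn_take_cutShape n_gt0 n_le_m incr_cutsOf) //.
case: j hj => [|j] hj; first by rewrite take0.
case: (ltnP j.+1 n) => hj'.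
  have hk : j < n.-1 by lia.
  by rewrite (cutAtS _ (Ordinal hk)) cutsOfE.
have -> : j.+1 = n by lia.
by rewrite (cutAt_last n_gt0) take_oversize ?sumn_shape_blocks // size_map size_blocks.
Qed.

Lemma wordOfE : val (wordOf s) = flatten (blocks s).
Proof. by rewrite insubdK // unfold_in size_flatten sumn_shape_blocks. Qed.

Lemma cutWordOfK : multsOf (cutWordOf s) = s.
Proof.
apply: eq_from_tnth => j; apply/ffunP => r; apply: val_inj => /=.
rewrite -!mult_tnth mult_multsOf /block /= cutShape_cutsOf wordOfE flattenK nth_blocks //.
by rewrite count_mem_flatten_nseq.
Qed.

Lemma sorted_wordOf : sorted ord_leq (wordOf s).
Proof.
rewrite wordOfE; apply: (sorted_flatten (x0 := ord0) ord_leq_trans blocks_nonempty).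
  by apply/allP => l /mapP[j _ ->]; exact: sorted_nseq_enum.
move=> j; rewrite size_blocks => hj; rewrite !nth_blocks //; last exact: ltnW.
by case/andP: (blocks_adjacent hj).
Qed.

Lemma cutWord_cutWordOf : cutWord (cutWordOf s).
Proof.
apply/andP; split; first exact: incr_cutsOf.
apply/forallP => j; apply/implyP => hj; rewrite !tvalE //= wordOfE.
apply/andP; split.
  have /(sortedP ord0) := sorted_wordOf.
  by rewrite size_tuple wordOfE; apply.
apply/implyP => /existsP[k /andP[/eqP jk Sk]].
have hk : k.+1 < n by have := ltn_ord k; lia.
have [-> ->] : nth ord0 (flatten (blocks s)) j.+1 = head ord0 (blockOf s k.+1) /\
               nth ord0 (flatten (blocks s)) j = last ord0 (blockOf s k).
  have := nth_flatten_boundary (j := k) ord0 blocks_nonempty.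
  rewrite size_blocks => /(_ hk) /=; rewrite -cutsOfE jk /=.
  by rewrite !nth_blocks //; exact: ltnW.
by case/andP: (blocks_adjacent hk) => _ /implyP; apply.
Qed.

End FromMultisets.

Section FromCutWords.
Variables (p : cutMap) (w : word).
Hypothesis pw_cutWord : cutWord (p, w).

Let incr_p : incr p := proj1 (andP pw_cutWord).
Let descWord_w : descWord (cutDescents alpha p) w := proj2 (andP pw_cutWord).
Let sh := cutShape p.

Lemma sumn_sh : sumn sh = m. Proof. exact: (sumn_cutShape n_gt0 n_le_m incr_p). Qed.
Lemma size_sh : size sh = n. Proof. exact: (size_cutShape n_gt0). Qed.

Lemma sorted_word : sorted ord_leq w.
Proof.
apply/(sortedP ord0) => j; rewrite size_tuple => hj.
have := forallP descWord_w (Ordinal (ltnW hj)); rewrite /= hj /= => /andP[h _].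
by move: h; rewrite !tvalE //; exact: ltnW.
Qed.

Lemma blockE j : block p w j = take (nth 0 sh j) (drop (sumn (take j sh)) w).
Proof. by rewrite /block nth_reshape. Qed.

Lemma size_block j : size (block p w j) = nth 0 sh j.
Proof. by rewrite /block -nth_shape reshapeKl // size_tuple sumn_sh. Qed.

Lemma blocks_multsOf : blocks (multsOf (p, w)) = reshape sh w.
Proof.
rewrite -[RHS](take_size) -(map_nth_iota0 [::]) // size_reshape size_sh.
apply/eq_in_map => j; rewrite mem_iota /= => hj.
have e r : mult (multsOf (p, w)) j r = count_mem r (block p w j).
  exact: mult_multsOf (p, w) (Ordinal hj) r.
rewrite /blockOf; under eq_map => r do rewrite e.
apply: (sorted_eq ord_leq_trans ord_leq_anti (sorted_nseq_enum _)).
  by rewrite nth_reshape; apply/take_sorted/drop_sorted/sorted_word.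
by rewrite /perm_eq; apply/allP => x _ /=; rewrite count_mem_flatten_nseq.
Qed.

Lemma multsOfK : cutWordOf (multsOf (p, w)) = (p, w).
Proof.
rewrite /cutWordOf /cutsOf /wordOf blocks_multsOf; congr pair.
  apply/ffunP => k; apply: val_inj; rewrite ffunE /=.
  have -> : sumn (take k.+1 (shape (reshape sh w))) = (p k).+1.
    rewrite reshapeKl ?size_tuple ?sumn_sh // (sumn_take_cutShape n_gt0 n_le_m incr_p).
      exact: cutAtS.
    by have := ltn_ord k; lia.
  by rewrite insubdK // unfold_in /=.
apply: val_inj; rewrite insubdK ?reshapeKr ?size_tuple ?sumn_sh //.
by rewrite unfold_in /= size_tuple.
Qed.

(* x sits at a position <= p j of w and y at a position >= p j + 1, and w
   increases strictly from p j to p j + 1 when j+1 is in S_alpha. *)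
Lemma block_adjacent j x y : j.+1 < n ->
  x \in block p w j -> y \in block p w j.+1 -> (x <= y) && (Sset alpha j.+1 ==> (x < y)).
Proof.
rewrite !blockE => hj /(mem_take_drop ord0)[a [a1 a2 a3 <-]].
move=> /(mem_take_drop ord0)[a' [a1' a2' a3' <-]]; rewrite size_tuple in a3 a3'.
have hk : j < n.-1 by lia.
have boundary : sumn (take j.+1 sh) = (p (Ordinal hk)).+1.
  rewrite (sumn_take_cutShape n_gt0 n_le_m incr_p) //; last lia.
  exact: (cutAtS _ (Ordinal hk)).
have split_sh : sumn (take j.+1 sh) = sumn (take j sh) + nth 0 sh j.
  by rewrite (take_nth 0) ?sumn_rcons // size_sh; exact: ltnW.
have sw := sorted_leq_nth ord_leq_trans ord_leq_refl ord0 sorted_word.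
apply/andP; split; first by apply: sw; rewrite ?inE ?size_tuple //; lia.
apply/implyP => Sj; set t := nat_of_ord (p (Ordinal hk)) in boundary.
have ht : t.+1 < m by have := ltn_ord (p (Ordinal hk)); rewrite /t; lia.
have := forallP descWord_w (Ordinal (ltnW ht)); rewrite /= ht /= => /andP[_ /implyP].
rewrite !tvalE //; last exact: ltnW.
have -> : cutDescents alpha p t.+1 by apply/existsP; exists (Ordinal hk); rewrite eqxx Sj.
move=> /(_ isT) w_step.
have h1 : ord_leq (nth ord0 w a) (nth ord0 w t) by apply: sw; rewrite ?inE ?size_tuple //; lia.
have h2 : ord_leq (nth ord0 w t.+1) (nth ord0 w a') by apply: sw; rewrite ?inE ?size_tuple //; lia.
by rewrite /ord_leq /= in h1 h2; lia.
Qed.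

Lemma hatL_pred_multsOf : hatL_pred (multsOf (p, w)).
Proof.
have size_block_gt0 j : j < n -> 0 < size (block p w j).
  move=> hj; rewrite size_block; have /allP := cutShape_pos n_gt0 n_le_m incr_p.
  by apply; apply: mem_nth; rewrite size_sh.
apply/and3P; split.
- apply/eqP; transitivity (\sum_(j < n) nth 0 sh j).
    apply: eq_bigr => j _; under eq_bigr => r _ do rewrite mult_multsOf.
    by rewrite sum_count_mem size_block.
  by rewrite -sumn_sh sumnE (big_nth 0) size_sh big_mkord.
- apply/forallP => j; have := size_block_gt0 j (ltn_ord j).
  case e: (block p w j) => [//|x l] _; apply/existsP; exists x.
  by rewrite mult_multsOf -has_count has_pred1 e mem_head.
apply/forallP => j; apply/implyP => hj; apply/forallP => r; apply/forallP => r'.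
rewrite (mult_multsOf _ j) (mult_multsOf _ (Ordinal hj)) -!has_count !has_pred1.
by apply/implyP => /andP[]; exact: block_adjacent.
Qed.

Lemma monomial_multsOf :
  (\prod_(j < n) \prod_(r : 'I_N) 'X_r ^+ mult (multsOf (p, w)) j r
   = \prod_(j < m) 'X_(tnth w j) :> {mpoly int[N]})%R.
Proof.
under eq_bigr => j _ do under eq_bigr => r _ do rewrite mult_multsOf.
under eq_bigr => j _ do rewrite prod_count_mem.
transitivity (\prod_(l <- reshape sh w) \prod_(x <- l) 'X_x : {mpoly int[N]})%R.
  by rewrite (big_nth [::]) size_reshape size_sh big_mkord.
by rewrite -big_flatten /= reshapeKr ?size_tuple ?sumn_sh // big_tuple.
Qed.

End FromCutWords.

Lemma hatL_sum_cutWords : hatL N n i alpha =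
  (\sum_(pw : cutMap * word | cutWord pw) \prod_(j < m) 'X_(tnth pw.2 j))%R.
Proof.
rewrite /hatL (reindex_onto multsOf cutWordOf); last by move=> s; exact: cutWordOfK.
apply: eq_big => [[p w]|[p w] /andP[s_valid /eqP <-]]; last first.
  by apply: monomial_multsOf; exact: cutWord_cutWordOf.
rewrite -/(hatL_pred (multsOf (p, w))).
apply/idP/idP => [/andP[s_valid /eqP <-]|pw_cutWord]; first exact: cutWord_cutWordOf.
by rewrite hatL_pred_multsOf // multsOfK // eqxx.
Qed.

End MultisetSide.

Lemma hatLE n i alpha N : 0 < n -> hatL N n i alpha =
  (\sum_(p : {ffun 'I_n.-1 -> 'I_(n + i).-1} | incr p)
     fundLP N (n + i) (cutDescents alpha p))%R.
Proof.
move=> n_gt0; case: N => [|N].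
  rewrite /hatL big_pred0; last first.
    by move=> s; apply/and3P => -[_ /forallP /(_ (Ordinal n_gt0)) /existsP [[]]].
  rewrite big1 // => p _; rewrite /fundLP big1 // => w _.
  by case: (tnth w (Ordinal (ltn_addr i n_gt0))).
by rewrite hatL_sum_cutWords // pair_big_dep.
Qed.

Unset Implicit Arguments.
Local Open Scope ring_scope.

Theorem mainTheorem3 (n : nat) (alpha : seq nat) (i N : nat) :
  (0 < n)%N -> is_comp n alpha ->
  hatL N n i alpha =
  \sum_(E : {set 'I_((n + i).-1)})
     (Tcount n (n + i) (Sset (omega n alpha)) (natset E))%:R
       *: fundL N (omega (n + i) (compOfSet (n + i) (natset E))).
Proof.
move=> n_gt0 /andP[_ /eqP sumn_alpha].
by rewrite hatLE // sum_Tcount_fundL.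
Qed.
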